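(* Let $(T,\rho_{T})$ and $(Z,\rho_{Z})$ be metric spaces, and define the metric $\rho_{T}\times\rho_{Z}$ on $T\times Z$ by $(\rho_{T}\times\rho_{Z})((t_{1},z_{1}),(t_{2},z_{2}))=\rho_{T}(t_{1},t_{2})+\rho_{Z}(z_{1},z_{2})$. Then \[\gamma_{2}(T\times Z,\rho_{T}\times\rho_{Z})\leq 3\gamma_{2}(T,\rho_{T})+3\gamma_{2}(Z,\rho_{Z}).\]
   Context: Let $N_{0}=1$ and $N_{k}=2^{2^{k}}$ for $k\geq1$. For a metric space $(T,\rho)$, a sequence $T_{0},T_{1},\ldots\subset T$ is admissible if $|T_{k}|\leq N_{k}$ for all $k\geq0$, and \[\gamma_{2}(T,\rho)=\inf_{\text{admissible }(T_{k})}\ \sup_{t\in T}\sum_{k=0}^{\infty}2^{k/2}\rho(t,T_{k}),\] where $\rho(t,T_{k})=\inf_{t_{k}\in T_{k}}\rho(t,t_{k})$. *)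

From HB Require Import structures.
From mathcomp Require Import all_boot all_order all_algebra.
From mathcomp Require Import all_classical all_reals.
From mathcomp Require Import all_analysis.
Set Implicit Arguments. Unset Strict Implicit. Unset Printing Implicit Defensive.
Import Order.TTheory GRing.Theory Num.Theory.
Local Open Scope classical_set_scope.
Local Open Scope ring_scope.

Definition is_metric (R : realType) (T : Type) (d : T -> T -> R) : Prop :=
  (forall x y, 0 <= d x y) /\
  (forall x y, d x y = 0 <-> x = y) /\
  (forall x y, d x y = d y x) /\
  (forall x y z, d x z <= d x y + d y z).

Definition Nk (k : nat) : nat := if k is 0 then 1%N else (2 ^ (2 ^ k))%N.

Definition card_le (T : Type) (A : set T) (n : nat) : Prop :=
  exists (m : nat) (f : 'I_m -> T), (m <= n)%N /\ A = f @` [set: 'I_m].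

Definition admissible (T : Type) (Tk : nat -> set T) : Prop :=
  forall k, card_le (Tk k) (Nk k).

Definition dist_to (R : realType) (T : Type) (d : T -> T -> R) (t : T) (A : set T)
  : \bar R := ereal_inf [set (d t a)%:E | a in A].

Definition chain_sum (R : realType) (T : Type) (d : T -> T -> R)
  (Tk : nat -> set T) (t : T) : \bar R :=
  (\sum_(0 <= k <oo) ((Num.sqrt (2 : R)) ^+ k)%:E * dist_to d t (Tk k))%E.

Definition gamma2 (R : realType) (T : Type) (d : T -> T -> R) : \bar R :=
  ereal_inf [set ereal_sup [set chain_sum d Tk t | t in [set: T]]
            | Tk in admissible (T := T)].

Definition prod_metric (R : realType) (T Z : Type) (dT : T -> T -> R)
  (dZ : Z -> Z -> R) : T * Z -> T * Z -> R :=
  fun p q => dT p.1 q.1 + dZ p.2 q.2.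

From Pilot Require Import Defs.
From HB Require Import structures.
From mathcomp Require Import all_boot all_order all_algebra.
From mathcomp Require Import all_classical all_reals.
From mathcomp Require Import all_analysis.
From mathcomp Require Import lra.

(* Given admissible sequences (T_k) and (Z_k), the sets U_0 = T_0 x Z_0 and
   U_k = T_(k-1) x Z_(k-1) form an admissible sequence for T x Z, because
   N_(k-1)^2 <= N_k.  Since
   rho((t, z), U_k) <= rho_T(t, T_(k-1)) + rho_Z(z, Z_(k-1)),
   shifting the index by one costs a factor sqrt 2 in the chain sum, which is
   therefore at most (1 + sqrt 2) <= 3 times the chain sum of t plus that of z.
   Taking infima over (T_k) and (Z_k) gives the bound. *)

Set Implicit Arguments. Unset Strict Implicit. Unset Printing Implicit Defensive.
Import Order.TTheory GRing.Theory Num.Theory.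
Local Open Scope classical_set_scope.
Local Open Scope ring_scope.

Lemma card_le_image (T : Type) (F : finType) (h : F -> T) :
  Defs.card_le (h @` setT) #|F|.
Proof.
exists #|F|, (h \o enum_val); split => //.
apply/seteqP; split => _ [x _ <-].
- by exists (enum_rank x) => //=; rewrite enum_rankK.
- by exists (enum_val x).
Qed.

Lemma card_le_leq (T : Type) (A : set T) m n :
  Defs.card_le A m -> (m <= n)%N -> Defs.card_le A n.
Proof.
by move=> [k [f [km ->]]] mn; exists k, f; split => //; apply: leq_trans mn.
Qed.

Lemma card_le_setX (T Z : Type) (A : set T) (B : set Z) m n :
  Defs.card_le A m -> Defs.card_le B n -> Defs.card_le (A `*` B) (m * n)%N.
Proof.
move=> [m' [f [m'm ->]]] [n' [g [n'n ->]]].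
have -> : (f @` setT) `*` (g @` setT) =
    (fun p : 'I_m' * 'I_n' => (f p.1, g p.2)) @` setT.
  apply/seteqP; split => [[x y] /= [[i _ <-] [j _ <-]]|_ [[i j] _ <-]].
  - by exists (i, j).
  - by split; [exists i | exists j].
apply: card_le_leq (card_le_image _) _.
by rewrite card_prod !card_ord leq_mul.
Qed.

Lemma sqr_Nk_pred_le k : (Nk k.-1 * Nk k.-1 <= Nk k)%N.
Proof. by case: k => [|[|k]] //=; rewrite -expnD addnn -mul2n -expnS. Qed.

Lemma admissible_set0 (T : Type) : admissible (fun _ => @set0 T).
Proof.
move=> k; have -> : @set0 T = of_void T @` setT.
  by apply/seteqP; split => [x //|_ [[]]].
by apply: card_le_leq (card_le_image _) _; rewrite card_void.
Qed.

Lemma admissible_setX_pred (T Z : Type) (Tk : nat -> set T) (Zk : nat -> set Z) :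
  admissible Tk -> admissible Zk -> admissible (fun k => Tk k.-1 `*` Zk k.-1).
Proof.
move=> hT hZ k; apply: card_le_leq (sqr_Nk_pred_le k).
exact: card_le_setX.
Qed.

Section chain_sum.
Variables (R : realType) (T : Type) (d : T -> T -> R).
Hypothesis d_ge0 : forall x y, 0 <= d x y.
Local Open Scope ereal_scope.

Lemma dist_to_ge0 t A : 0 <= dist_to d t A.
Proof. by apply: le_ereal_inf_tmp => _ [a _ <-]; rewrite lee_fin. Qed.

Lemma dist_to_attained t A n : Defs.card_le A n ->
  A = set0 \/ exists2 a, A a & dist_to d t A = (d t a)%:E.
Proof.
move=> [[|m] [f [_ ->]]].
  by left; apply/seteqP; split => [x [[]]|].
right; have [i _ min_i] := arg_minP (fun j => d t (f j)) (isT : xpredT ord0).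
exists (f i); first by exists i.
apply/le_anti/andP; split.
  by apply: ereal_inf_lbound; exists (f i) => //; exists i.
by apply: le_ereal_inf_tmp => _ [_ [j _ <-] <-]; rewrite lee_fin min_i.
Qed.

Lemma chain_term_ge0 Tk t k : 0 <= (Num.sqrt 2 ^+ k)%:E * dist_to d t (Tk k).
Proof. by rewrite mule_ge0 ?dist_to_ge0 // lee_fin exprn_ge0 ?sqrtr_ge0. Qed.

Lemma chain_sum_ge0 Tk t : 0 <= chain_sum d Tk t.
Proof. by apply: nneseries_ge0 => k _ _; apply: chain_term_ge0. Qed.

Lemma ereal_sup_chain_sum_ge0 Tk (t0 : T) :
  0 <= ereal_sup [set chain_sum d Tk t | t in setT].
Proof.
apply: le_trans (chain_sum_ge0 Tk t0) _.
by apply: ereal_sup_ubound; exists t0.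
Qed.

End chain_sum.

Lemma gamma2_le_sup (R : realType) (T : Type) (d : T -> T -> R) Tk :
  admissible Tk -> (gamma2 d <= ereal_sup [set chain_sum d Tk t | t in setT])%E.
Proof. by move=> hT; apply: ereal_inf_lbound; exists Tk. Qed.

Lemma gamma2_empty (R : realType) (T : Type) (d : T -> T -> R) :
  (T -> False) -> gamma2 d = -oo%E.
Proof.
move=> noT; apply/eqP; rewrite -leeNy_eq.
apply: le_trans (gamma2_le_sup d (admissible_set0 T)) _.
by apply/ereal_supP => y [t]; case: (noT t).
Qed.

Lemma nneseries_shift_le (R : realType) (u v : nat -> \bar R) (r : R) :
  0 <= r -> (forall k, (0 <= u k)%E) -> (forall k, (0 <= v k)%E) ->
  (u 0%N <= v 0%N)%E -> (forall k, u k.+1 <= r%:E * v k)%E ->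
  (\sum_(0 <= k <oo) u k <= (1 + r)%:E * \sum_(0 <= k <oo) v k)%E.
Proof.
move=> r0 u0 v0 uv0 uvS.
have V0 : (0 <= \sum_(0 <= k <oo) v k)%E by apply: nneseries_ge0.
rewrite nneseries_recl // -(nneseries_addn 1 u0) EFinD ge0_muleDl ?lee_fin // mul1e.
apply: leeD.
  apply: le_trans uv0 _.
  have := @nneseries_lim_ge _ v xpredT 0%N 1%N (fun k _ _ => v0 k).
  by rewrite big_nat1.
rewrite -nneseriesZl //; apply: lee_nneseries => [k _ _|k _]; first exact: u0.
by rewrite addn1.
Qed.

Section prod_metric.
Variables (R : realType) (T Z : Type) (dT : T -> T -> R) (dZ : Z -> Z -> R).
Hypotheses (dT_ge0 : forall x y, 0 <= dT x y) (dZ_ge0 : forall x y, 0 <= dZ x y).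
Local Open Scope ereal_scope.

Lemma dist_to_setX t z A B m n : Defs.card_le A m -> Defs.card_le B n ->
  dist_to (prod_metric dT dZ) (t, z) (A `*` B) <= dist_to dT t A + dist_to dZ z B.
Proof.
move=> cA cB.
have [->|[a Aa ->]] := dist_to_attained dT t cA.
  rewrite /dist_to image_set0 ereal_inf0 addye ?leey //.
  by rewrite gt_eqF // (lt_le_trans _ (dist_to_ge0 _ _ _)) ?ltNy0.
have [->|[b Bb ->]] := dist_to_attained dZ z cB.
  by rewrite [X in _ <= _ + X]/dist_to image_set0 ereal_inf0 addey ?leey.
by apply: ereal_inf_lbound; exists (a, b).
Qed.

Lemma chain_sum_setX_pred_le Tk Zk t z : admissible Tk -> admissible Zk ->
  chain_sum (prod_metric dT dZ) (fun k => Tk k.-1 `*` Zk k.-1) (t, z) <=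
  3%:E * chain_sum dT Tk t + 3%:E * chain_sum dZ Zk z.
Proof.
move=> hT hZ; set s := Num.sqrt (2 : R).
have s_ge0 : (0 <= s)%R by exact: sqrtr_ge0.
have s1_le3 : (1 + s)%:E <= 3%:E.
  by have := sqr_sqrtr (ler0n R 2); rewrite -/s lee_fin; nra.
rewrite -!ge0_muleDr ?chain_sum_ge0 // -!nneseriesD;
  try by move=> k _ _; apply: chain_term_ge0.
apply: le_trans (lee_wpmul2r _ s1_le3); last first.
  by apply: nneseries_ge0 => k _ _; apply: adde_ge0; apply: chain_term_ge0.
apply: nneseries_shift_le => // [k|k||k].
- by rewrite mule_ge0 ?lee_fin ?exprn_ge0 // dist_to_ge0 // => ? ?; rewrite addr_ge0.
- by apply: adde_ge0; apply: chain_term_ge0.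
- by rewrite !expr0 !mul1e; exact: dist_to_setX (hT 0%N) (hZ 0%N).
rewrite /= exprS EFinM -muleA lee_wpmul2l ?lee_fin //.
rewrite -ge0_muleDr ?dist_to_ge0 // lee_wpmul2l ?lee_fin ?exprn_ge0 //.
exact: dist_to_setX (hT k) (hZ k).
Qed.

End prod_metric.

Lemma le_ereal_infD (R : realType) (X Y : set (\bar R)) (x : \bar R) :
  (forall a, X a -> (0 <= a)%E) -> (forall b, Y b -> (0 <= b)%E) ->
  (forall a b, X a -> Y b -> (x <= a + b)%E) ->
  (x <= ereal_inf X + ereal_inf Y)%E.
Proof.
move=> X_ge0 Y_ge0 xXY.
have infX_ge0 : (0 <= ereal_inf X)%E by apply: le_ereal_inf_tmp.
have infY_ge0 : (0 <= ereal_inf Y)%E by apply: le_ereal_inf_tmp.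
case EX: (ereal_inf X) infX_ge0 => [r1| |] // _; last first.
  by rewrite addye ?leey // gt_eqF // (lt_le_trans _ infY_ge0) ?ltNy0.
case EY: (ereal_inf Y) infY_ge0 => [r2| |] // _; last by rewrite addey ?leey.
apply/lee_addgt0Pr => e e_gt0.
have /ereal_inf_ltP[a Xa a_lt] : (ereal_inf X < (r1 + e / 2)%:E)%E.
  by rewrite EX lte_fin; lra.
have /ereal_inf_ltP[b Yb b_lt] : (ereal_inf Y < (r2 + e / 2)%:E)%E.
  by rewrite EY lte_fin; lra.
apply: le_trans (xXY _ _ Xa Yb) (le_trans (leeD (ltW a_lt) (ltW b_lt)) _).
by rewrite -!EFinD lee_fin; lra.
Qed.

Theorem lemma2p1 (R : realType) (T Z : Type)
  (dT : T -> T -> R) (dZ : Z -> Z -> R) :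
  is_metric dT -> is_metric dZ ->
  (gamma2 (prod_metric dT dZ) <= 3%:E * gamma2 dT + 3%:E * gamma2 dZ)%E.
Proof.
move=> [dT_ge0 _] [dZ_ge0 _].
have [[[t0 z0]]|noTZ] := pselect (inhabited (T * Z)); last first.
  by rewrite gamma2_empty ?leNye // => p; apply: noTZ.
rewrite -!ereal_inf_pZl //.
apply: le_ereal_infD => [_ [_ [Tk _ <-] <-]|_ [_ [Zk _ <-] <-]|].
- by rewrite mule_ge0 ?lee_fin ?(ereal_sup_chain_sum_ge0 dT_ge0 Tk t0).
- by rewrite mule_ge0 ?lee_fin ?(ereal_sup_chain_sum_ge0 dZ_ge0 Zk z0).
move=> _ _ [_ [Tk hT <-] <-] [_ [Zk hZ <-] <-].
apply: le_trans (gamma2_le_sup _ (admissible_setX_pred hT hZ)) _.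
apply/ereal_supP => _ [[t z] _ <-].
apply: le_trans (chain_sum_setX_pred_le dT_ge0 dZ_ge0 t z hT hZ) _.
by apply: leeD; apply: lee_wpmul2l => //; apply: ereal_sup_ubound;
  [exists t | exists z].
Qed.
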